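(* Let $\varphi,\varphi_0:\mathbb{R}^d\to\mathbb{R}$, $p$ a positive integer, $w\in\mathbb{R}^d$, and $\hat\varphi_p(x;w):=\sum_{i=0}^p\frac1{i!}\nabla^i\varphi(w)[x-w]^{\otimes i}$. Suppose $\nabla^p\varphi$ is Lipschitz, $x_\varphi\in\arg\min_x\varphi(x)+\varphi_0(x)$, and $$x_{\hat\varphi_p}\in\arg\min_x\hat\varphi_p(x;w)+\frac{\mathrm{Lip}(\nabla^p\varphi)}{(p+1)!}\|x-w\|_2^{p+1}+\varphi_0(x).$$ If $\hat\varphi_p(\cdot;w)+\frac{\mathrm{Lip}(\nabla^p\varphi)}{(p+1)!}\|\cdot-w\|_2^{p+1}+\varphi_0$ has $\nu(r)=\mu r^q$ gradient growth for some $\mu>0$ and $q>0$, then $$\|x_\varphi-x_{\hat\varphi_p}\|_2^{q-1}\le\frac{2\,\mathrm{Lip}(\nabla^p\varphi)}{\mu}\frac1{p!}\|x_\varphi-w\|_2^p.$$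
   Context: For a matrix or tensor $H$, $\|H\|_{op}:=\sup_{v\ne0}\|H[v]\|_{op}/\|v\|_2$ (with $\|v\|_{op}=\|v\|_2$ for vectors), and $\mathrm{Lip}(f):=\sup_{x\ne y}\|f(x)-f(y)\|_{op}/\|x-y\|_2$. A function $\psi$ has $\nu$ gradient growth if it is subdifferentiable and $\nu(\|x-y\|_2)\le\langle y-x,u-v\rangle$ for all $x,y\in\mathbb{R}^d$ and all $u\in\partial\psi(y)$, $v\in\partial\psi(x)$. *)

From HB Require Import structures.
From mathcomp Require Import all_boot all_order all_algebra.
From mathcomp Require Import all_classical all_reals all_analysis.
Set Implicit Arguments. Unset Strict Implicit. Unset Printing Implicit Defensive.
Import Order.TTheory GRing.Theory Num.Theory.
Import numFieldNormedType.Exports.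
Local Open Scope classical_set_scope.
Local Open Scope ring_scope.

Section Defs.
Variables (R : realType) (d : nat).
Notation V := 'rV[R]_d.

Definition dot (u v : V) : R := \sum_(i < d) u ord0 i * v ord0 i.
Definition norm2 (v : V) : R := Num.sqrt (dot v v).

(* k-th derivative of f at x applied to the directions vs = [v1; ...; vk]:
   nabla^k f(x)[v1,...,vk], defined by iterated directional derivatives. *)
Fixpoint Dk (k : nat) (f : V -> R) : V -> seq V -> R :=
  match k with
  | 0 => fun x _ => f x
  | k'.+1 => fun x vs => 'D_(head 0 vs) (fun y => Dk k' f y (behead vs)) x
  end.

(* Operator norm of a k-tensor T (as a k-linear form):
   sup of |T[v1,...,vk]| over vectors of Euclidean norm <= 1
   (this is what the recursive definition ||H||_op = sup ||H[v]||_op/||v||,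
    with ||v||_op = ||v||_2, unfolds to). *)
Definition opnorm (k : nat) (T : seq V -> R) : R :=
  sup [set `|T vs| | vs in [set vs : seq V | size vs = k /\
                                     forall v, v \in vs -> norm2 v <= 1]].

Definition LipD (p : nat) (f : V -> R) : R :=
  sup [set r | exists x y : V, x != y /\
         r = opnorm p (fun vs => Dk p f x vs - Dk p f y vs) / norm2 (x - y)].

Definition taylor (p : nat) (f : V -> R) (w x : V) : R :=
  \sum_(i < p.+1) (i`!%:R)^-1 * Dk i f w (nseq i (x - w)).

Definition subdiff (psi : V -> R) (x : V) : set V :=
  [set u | forall y, psi x + dot u (y - x) <= psi y].

Definition subdifferentiable (psi : V -> R) : Prop :=
  forall x, exists u, subdiff psi x u.

Definition gradient_growth (nu : R -> R) (psi : V -> R) : Prop :=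
  subdifferentiable psi /\
  forall x y u v, subdiff psi y u -> subdiff psi x v ->
    nu (norm2 (x - y)) <= dot (y - x) (u - v).

End Defs.

From HB Require Import structures.
From mathcomp Require Import all_boot all_order all_algebra.
From mathcomp Require Import all_classical all_reals all_analysis.
From mathcomp Require Import ring lra.
Set Implicit Arguments. Unset Strict Implicit. Unset Printing Implicit Defensive.
Import Order.TTheory GRing.Theory Num.Theory.
Import numFieldNormedType.Exports.
Local Open Scope classical_set_scope.
Local Open Scope ring_scope.

(* Let psi be the regularized model [taylor_model] and e = xphi - xhat. Since xhat
   minimizes psi, 0 is a subgradient of psi at xhat. For 0 < t < 1 let u be a
   subgradient at x_t = xphi - t e: gradient growth between xhat and x_t gives
   mu |e|^q (1 - t)^(q-1) <= <e, u>, and the subgradient inequality at x_t gives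
   t <e, u> <= psi xphi - psi x_t. Because xphi minimizes phi + phi0, this gap is
   bounded by the variation of the Taylor error phi - taylor plus that of the
   regularizer; on the ball of radius rho around w the former is Lipschitz with
   constant Lip rho^p / p! (Taylor's formula along segments, applied to the p-th
   derivative), so the gap is at most 2 Lip t |e| (|xphi - w| + t |e|)^p / p!. Dividing by t and letting t -> 0
   gives mu |e|^q <= 2 Lip |e| |xphi - w|^p / p!, and dividing by |e| concludes.
   When e = 0 the exponent q - 1 must be nonzero: gradient growth mu r is
   impossible, as the subgradient slope along a line would jump by mu everywhere. *)

Lemma natr_fact_neq0 (R : numDomainType) n : n`!%:R != 0 :> R.
Proof. by rewrite pnatr_eq0 -lt0n fact_gt0. Qed.

Section Euclidean.
Variables (R : realType) (d : nat).
Local Notation V := 'rV[R]_d.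

Lemma dotC (u v : V) : dot u v = dot v u.
Proof. by apply: eq_bigr => i _; rewrite mulrC. Qed.

Lemma dotDr (u v w : V) : dot u (v + w) = dot u v + dot u w.
Proof. by rewrite /dot -big_split; apply: eq_bigr => i _; rewrite !mxE mulrDr. Qed.

Lemma dotZr (a : R) (u v : V) : dot u (a *: v) = a * dot u v.
Proof. by rewrite /dot mulr_sumr; apply: eq_bigr => i _; rewrite !mxE mulrCA. Qed.

Lemma dotBr (u v w : V) : dot u (v - w) = dot u v - dot u w.
Proof. by rewrite dotDr -scaleN1r dotZr mulN1r. Qed.

Lemma dotDl (u v w : V) : dot (v + w) u = dot v u + dot w u.
Proof. by rewrite dotC dotDr !(dotC u). Qed.

Lemma dotZl (a : R) (u v : V) : dot (a *: v) u = a * dot v u.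
Proof. by rewrite dotC dotZr dotC. Qed.

Lemma dotBl (u v w : V) : dot (v - w) u = dot v u - dot w u.
Proof. by rewrite dotC dotBr !(dotC u). Qed.

Lemma dot0l (u : V) : dot 0 u = 0.
Proof. by rewrite -(scale0r 0) dotZl mul0r. Qed.

Lemma dotvv_ge0 (v : V) : 0 <= dot v v.
Proof. by apply: sumr_ge0 => i _; rewrite -expr2 sqr_ge0. Qed.

Lemma dotvv_eq0 (v : V) : dot v v = 0 -> v = 0.
Proof.
move=> v0; apply/rowP => i; rewrite mxE.
have /eqP : v ord0 i * v ord0 i = 0.
  by apply: (psumr_eq0P _ v0) => // j _; rewrite -expr2 sqr_ge0.
by rewrite mulf_eq0 orbb => /eqP.
Qed.

Lemma norm2_ge0 (v : V) : 0 <= norm2 v.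
Proof. exact: sqrtr_ge0. Qed.

Lemma norm2_sqr (v : V) : norm2 v ^+ 2 = dot v v.
Proof. by rewrite /norm2 sqr_sqrtr // dotvv_ge0. Qed.

Lemma norm20 : norm2 (0 : V) = 0.
Proof. by rewrite /norm2 dot0l sqrtr0. Qed.

Lemma norm2_gt0 (v : V) : v != 0 -> 0 < norm2 v.
Proof.
move=> v0; rewrite lt_neqAle norm2_ge0 andbT eq_sym; apply: contra v0 => /eqP nv0.
by apply/eqP/dotvv_eq0; rewrite -norm2_sqr nv0 expr0n.
Qed.

Lemma norm2Z (a : R) (v : V) : norm2 (a *: v) = `|a| * norm2 v.
Proof.
by rewrite /norm2 dotZr dotZl mulrA -expr2 sqrtrM ?sqr_ge0 // sqrtr_sqr.
Qed.

Lemma norm2N (v : V) : norm2 (- v) = norm2 v.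
Proof. by rewrite -scaleN1r norm2Z normrN1 mul1r. Qed.

Lemma coord_le_norm2 (v : V) i : `|v ord0 i| <= norm2 v.
Proof.
rewrite -sqrtr_sqr /norm2 ler_sqrt ?dotvv_ge0 // /dot (bigD1 i) //= expr2.
by rewrite lerDl sumr_ge0 // => j _; rewrite -expr2 sqr_ge0.
Qed.

Lemma cauchy_schwarz (u v : V) : dot u v <= norm2 u * norm2 v.
Proof.
have sqr_le : dot u v ^+ 2 <= dot u u * dot v v.
  have [v0|v0] := eqVneq v 0; first by rewrite v0 (dotC u) !dot0l expr0n mulr0.
  have vv_gt0 : 0 < dot v v by rewrite -norm2_sqr exprn_gt0 ?norm2_gt0.
  (* expand 0 <= |u - l v|^2 at the minimizer l = <u,v> / <v,v> *)
  have := dotvv_ge0 (u - (dot u v / dot v v) *: v).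
  rewrite dotBl !dotBr !dotZl !dotZr (dotC v u) mulfVK ?gt_eqF // subrr subr0.
  by rewrite subr_ge0 mulrAC -expr2 ler_pdivrMr.
apply: le_trans (ler_norm _) _.
by rewrite -sqrtr_sqr /norm2 -sqrtrM ?dotvv_ge0 // ler_sqrt ?mulr_ge0 ?dotvv_ge0.
Qed.

Lemma ler_norm2D (u v : V) : norm2 (u + v) <= norm2 u + norm2 v.
Proof.
rewrite -ler_sqr ?nnegrE ?addr_ge0 ?norm2_ge0 //.
rewrite norm2_sqr dotDl !dotDr (dotC v u) -!norm2_sqr sqrrD.
by have := cauchy_schwarz u v; lra.
Qed.

End Euclidean.

Section Multilinear.
Variables (R : realType) (d : nat).
Local Notation V := 'rV[R]_d.

Fixpoint multilinear (k : nat) (T : seq V -> R) : Prop :=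
  match k with
  | 0 => True
  | k'.+1 =>
      (forall (a : R) (u v : V) vs, T (a *: u + v :: vs) = a * T (u :: vs) + T (v :: vs))
      /\ forall u, multilinear k' (fun vs => T (u :: vs))
  end.

Lemma multilinearB k (T S : seq V -> R) :
  multilinear k T -> multilinear k S -> multilinear k (fun vs => T vs - S vs).
Proof.
elim: k T S => [//|k IH] T S /= [lT mT] [lS mS]; split; last by move=> u; apply: IH.
by move=> a u v vs; rewrite lT lS; ring.
Qed.

Section FirstSlot.
Variables (k : nat) (T : seq V -> R).
Hypothesis T_mlin : multilinear k.+1 T.

Lemma multilinear_consD u v vs : T (u + v :: vs) = T (u :: vs) + T (v :: vs).
Proof. by case: T_mlin => lT _; rewrite -[u]scale1r lT mul1r scale1r. Qed.

Lemma multilinear_cons0 vs : T (0 :: vs) = 0.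
Proof. by apply: (addrI (T (0 :: vs))); rewrite -multilinear_consD !addr0. Qed.

Lemma multilinear_consZ a u vs : T (a *: u :: vs) = a * T (u :: vs).
Proof.
by case: T_mlin => lT _; rewrite -[a *: u]addr0 lT multilinear_cons0 addr0.
Qed.

Lemma multilinear_cons_sum (c : 'I_d -> R) (e : 'I_d -> V) vs :
  T ((\sum_i c i *: e i) :: vs) = \sum_i c i * T (e i :: vs).
Proof.
apply: (big_ind2 (fun x y => T (x :: vs) = y)); first exact: multilinear_cons0.
  by move=> x1 y1 x2 y2 <- <-; rewrite multilinear_consD.
by move=> i _; rewrite multilinear_consZ.
Qed.

End FirstSlot.

Definition unit_ball_seq (k : nat) : set (seq V) :=
  [set vs | size vs = k /\ forall v, v \in vs -> norm2 v <= 1].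

Lemma nseq0_unit_ball_seq k : unit_ball_seq k (nseq k 0).
Proof. by split=> [|v /nseqP[-> _]]; rewrite ?size_nseq ?norm20. Qed.

Lemma multilinear_bounded k (T : seq V -> R) : multilinear k T ->
  exists C, forall vs, unit_ball_seq k vs -> `|T vs| <= C.
Proof.
elim: k T => [|k IH] T T_mlin.
  by exists `|T [::]| => vs [/size0nil -> _].
have /choice[C hC] : forall i : 'I_d, exists C, forall vs, unit_ball_seq k vs ->
    `|T (delta_mx 0 i :: vs)| <= C.
  by move=> i; apply: IH; case: T_mlin => _; apply.
exists (\sum_i C i) => vs [+ v1]; case: vs v1 => [//|v vs] v1 /= [sz].
rewrite [v]row_sum_delta (multilinear_cons_sum T_mlin).
apply: le_trans (ler_norm_sum _ _ _) _; apply: ler_sum => i _; rewrite normrM.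
have vi1 : `|v 0 i| <= 1.
  by apply: le_trans (coord_le_norm2 _ _) (v1 v _); rewrite inE eqxx.
apply: le_trans (ler_piMl (normr_ge0 _) vi1) _; apply: hC; split=> // x xvs.
by apply: v1; rewrite inE xvs orbT.
Qed.

Lemma multilinear_normalize k (T : seq V -> R) : multilinear k T ->
  forall vs, size vs = k ->
  exists2 us, unit_ball_seq k us & `|T vs| <= \prod_(v <- vs) norm2 v * `|T us|.
Proof.
elim: k T => [|k IH] T T_mlin.
  by move=> vs /size0nil ->; exists [::]; rewrite ?big_nil ?mul1r.
move=> [//|v vs] /= [sz].
have [->|v0] := eqVneq v 0.
  exists (nseq k.+1 0); first exact: nseq0_unit_ball_seq.
  by rewrite (multilinear_cons0 T_mlin) normr0 mulr_ge0 // prodr_ge0 // => x _; exact: norm2_ge0.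
have nv_gt0 := norm2_gt0 v0.
pose v' := (norm2 v)^-1 *: v.
have vE : v = norm2 v *: v' by rewrite /v' scalerA mulfV ?gt_eqF // scale1r.
have nv' : norm2 v' = 1 by rewrite /v' norm2Z ger0_norm ?invr_ge0 ?ltW // mulVf ?gt_eqF.
have [|us [szu us1] leT] := IH (fun vs => T (v' :: vs)) _ vs sz.
  by case: T_mlin => _; apply.
exists (v' :: us).
  by split=> [|x]; [rewrite /= szu | rewrite inE => /orP[/eqP ->|/us1 //]; rewrite nv'].
rewrite big_cons vE (multilinear_consZ T_mlin) normrM ger0_norm ?norm2_ge0 // -mulrA.
by rewrite -vE ler_wpM2l ?norm2_ge0.
Qed.

Lemma opnorm_ge0 k (T : seq V -> R) : 0 <= opnorm k T.
Proof.
rewrite /opnorm; have [hs|hs] := pselect (has_sup [set `|T vs| | vs in unit_ball_seq k]).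
  apply: le_trans (sup_upper_bound hs _); first exact: (normr_ge0 (T (nseq k 0))).
  by exists (nseq k 0); first exact: nseq0_unit_ball_seq.
by rewrite sup_out.
Qed.

Lemma ler_opnorm k (T : seq V -> R) : multilinear k T -> forall vs, size vs = k ->
  `|T vs| <= opnorm k T * \prod_(v <- vs) norm2 v.
Proof.
move=> T_mlin vs sz; have [us us1 leT] := multilinear_normalize T_mlin sz.
have prod_ge0 : 0 <= \prod_(v <- vs) norm2 v by apply: prodr_ge0 => x _; exact: norm2_ge0.
apply: (le_trans leT); rewrite mulrC ler_wpM2r //.
apply: sup_upper_bound; last by exists us.
split; first by exists `|T us|, us.
have [C hC] := multilinear_bounded T_mlin.
by exists C => _ [ws ws1 <-]; apply: hC.
Qed.

End Multilinear.

Section Derivatives.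
Variables (R : realType) (d : nat).
Local Notation V := 'rV[R]_d.

Lemma multilinear_derive n (S : V -> seq V -> R) (y v : V) :
  (forall z, multilinear n (S z)) -> (forall vs, derivable (fun z => S z vs) y v) ->
  multilinear n (fun vs => 'D_v (fun z => S z vs) y).
Proof.
elim: n S => [//|n IH] S S_mlin S_der /=; split.
  move=> a u u' vs.
  have -> : (fun z => S z (a *: u + u' :: vs)) =
      a \*: (fun z => S z (u :: vs)) + (fun z => S z (u' :: vs)).
    by apply: funext => z /=; case: (S_mlin z) => ->.
  by rewrite deriveD ?deriveZ //; exact: derivableZ.
move=> u; apply: (IH (fun z vs => S z (u :: vs))) => // z.
by case: (S_mlin z) => _; apply.
Qed.

Lemma multilinear_Dk (phi : V -> R) (p : nat) :
  (forall k, (k < p)%N -> forall vs x, differentiable (fun y => Dk k phi y vs) x) ->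
  forall k, (k <= p)%N -> forall y, multilinear k (Dk k phi y).
Proof.
move=> phi_diff; elim=> [//|k IH] kp y /=; split.
  move=> a u v vs; have D_diff := phi_diff k kp vs y.
  by rewrite !deriveE // linearD linearZ.
move=> u; apply: (multilinear_derive (S := Dk k phi)) => [z|vs].
  exact/IH/ltnW.
exact/diff_derivable/phi_diff.
Qed.

Lemma is_derive_line (F : V -> R) (w b : V) (s : R) :
  derivable F (w + s *: b) b ->
  is_derive s 1 (fun t => F (w + t *: b)) ('D_b F (w + s *: b)).
Proof.
have quotE : (fun h : R => h^-1 *: (((fun t => F (w + t *: b)) \o shift s) (h *: 1)
            - F (w + s *: b))) =
         (fun h : R => h^-1 *: ((F \o shift (w + s *: b)) (h *: b) - F (w + s *: b))).
  apply: funext => h /=; congr (_ *: (F _ - _)).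
  by rewrite /shift /= [h *: 1]mulr1 scalerDl addrCA addrC.
by move=> F_der; split; [rewrite /derivable quotE | rewrite /derive quotE].
Qed.

End Derivatives.

Section TaylorOnInterval.
Variable R : realType.

Lemma ge0_of_derive_ge0 (h dh : R -> R) :
  (forall s : R, is_derive s (1 : R) h (dh s)) -> h 0 = 0 ->
  (forall s, 0 <= s <= 1 -> 0 <= dh s) -> forall s, 0 <= s <= 1 -> 0 <= h s.
Proof.
move=> h_der h0 dh_ge0 s /andP[s0 s1]; rewrite -h0.
apply: (@ger0_derive1_ndecr _ h 0 1) => //.
- move=> x; rewrite in_itv /= => /andP[x0 x1].
  by rewrite derive1E derive_val dh_ge0 // !ltW.
- by apply: derivable_within_continuous => x _; case: (h_der x).
Qed.

Lemma ler_norm_of_derive (f g df dg : R -> R) :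
  (forall s : R, is_derive s (1 : R) f (df s)) -> (forall s : R, is_derive s (1 : R) g (dg s)) ->
  f 0 = 0 -> g 0 = 0 -> (forall s, 0 <= s <= 1 -> `|df s| <= dg s) ->
  forall s, 0 <= s <= 1 -> `|f s| <= g s.
Proof.
move=> f_der g_der f0 g0 ledg s s01.
have gBf_ge0 : 0 <= (g - f) s.
  apply: (ge0_of_derive_ge0 (fun x => is_deriveB (g_der x) (f_der x))) => //.
    by rewrite !fctE f0 g0 subrr.
  by move=> x x01; rewrite subr_ge0 (le_trans (ler_norm _) (ledg x x01)).
have gDf_ge0 : 0 <= (g + f) s.
  apply: (ge0_of_derive_ge0 (fun x => is_deriveD (g_der x) (f_der x))) => //.
    by rewrite !fctE f0 g0 addr0.
  by move=> x x01; rewrite -lerBlDr sub0r (le_trans _ (ledg x x01)) // -normrN ler_norm.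
by move: gBf_ge0 gDf_ge0; rewrite !fctE ler_norml => *; apply/andP; split; lra.
Qed.

Lemma taylor_remainder_bound n (G : nat -> R -> R) (M : R) :
  (forall k (s : R), (k < n)%N -> is_derive s (1 : R) (G k) (G k.+1 s)) ->
  (forall s, 0 <= s <= 1 -> `|G n s - G n 0| <= M * s) ->
  forall s, 0 <= s <= 1 ->
  `|G 0 s - \sum_(k < n.+1) G k 0 / k`!%:R * s ^+ k| <= M * s ^+ n.+1 / n.+1`!%:R.
Proof.
elim: n G => [|n IH] G G_der Gn_lip s s01.
  by rewrite big_ord1 expr0 expr1 mulr1 !divr1; exact: Gn_lip.
pose P := \poly_(k < n.+2) (G k 0 / k`!%:R).
pose Q := \poly_(k < n.+1) (G k.+1 0 / k`!%:R).
have PQ : P^`() = Q.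
  apply/polyP => i; rewrite coef_deriv !coef_poly ltnS.
  case: ifP => _; last by rewrite mul0rn.
  by rewrite factS natrM -mulr_natr; field; rewrite natr_fact_neq0 addrC natr1 pnatr_eq0.
have f_der (s' : R) : is_derive s' (1 : R) (G 0 - horner P) (G 1 s' - Q.[s']).
  by rewrite -PQ; apply: is_deriveB; exact: G_der.
pose c := M / n.+2`!%:R.
have g_der (s' : R) : is_derive s' (1 : R) (horner (c *: 'X^(n.+2))) (M * s' ^+ n.+1 / n.+1`!%:R).
  apply: is_derive_eq; rewrite derivZ derivXn hornerZ hornerMn hornerXn /c.
  by rewrite [n.+2`!]factS natrM -mulr_natr; field; rewrite natr_fact_neq0 -natrD pnatr_eq0.
have f0 : (G 0 - horner P) 0 = 0.
  rewrite !fctE horner_poly big_ord_recl big1 => [|i _]; last by rewrite expr0n mulr0.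
  by rewrite expr0 mulr1 divr1 addr0 subrr.
have g0 : (c *: 'X^(n.+2)).[0] = 0 by rewrite hornerZ hornerXn expr0n mulr0.
have := ler_norm_of_derive f_der g_der f0 g0 _ s01.
rewrite !fctE horner_poly hornerZ hornerXn /c mulrAC; apply => x x01.
by rewrite horner_poly; apply: (IH (fun k => G k.+1)) => // k y kn; apply: G_der.
Qed.

End TaylorOnInterval.

Lemma natrM_expr_pred (R : realType) k (x : R) : k%:R * (x * x ^+ k.-1) = k%:R * x ^+ k.
Proof. by case: k => [|k]; rewrite ?mul0r // -exprS. Qed.

Section DiagonalDifference.
Variables (R : realType) (d : nat).
Local Notation V := 'rV[R]_d.

Lemma prod_norm2_nseq k (x : V) : \prod_(v <- nseq k x) norm2 v = norm2 x ^+ k.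
Proof. by elim: k => [|k IH]; rewrite ?big_nil // big_cons IH exprS. Qed.

Lemma multilinear_diag_lipschitz k (T : seq V -> R) (C rho : R) (a b : V) :
  multilinear k T -> 0 <= C ->
  (forall vs, size vs = k -> `|T vs| <= C * \prod_(v <- vs) norm2 v) ->
  norm2 a <= rho -> norm2 b <= rho ->
  `|T (nseq k b) - T (nseq k a)| <= k%:R * C * norm2 (b - a) * rho ^+ k.-1.
Proof.
elim: k T C => [|k IH] T C T_mlin C0 T_bd a_le b_le.
  by rewrite subrr normr0 !mul0r.
have rho0 : 0 <= rho := le_trans (norm2_ge0 a) a_le.
(* T(b,..,b) - T(a,..,a) = T(b - a, b,..,b) + (T(a, b,..,b) - T(a, a,..,a)) *)
rewrite /= -[X in T (X :: _)](subrK a b) (multilinear_consD T_mlin) -addrA.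
apply: le_trans (ler_normD _ _) _.
have head_le : `|T (b - a :: nseq k b)| <= C * norm2 (b - a) * rho ^+ k.
  apply: le_trans (T_bd _ _) _; first by rewrite /= size_nseq.
  rewrite big_cons prod_norm2_nseq mulrA ler_wpM2l ?mulr_ge0 ?norm2_ge0 //.
  by rewrite lerXn2r ?nnegrE ?norm2_ge0.
have tail_le : `|T (a :: nseq k b) - T (a :: nseq k a)|
    <= k%:R * (C * rho) * norm2 (b - a) * rho ^+ k.-1.
  apply: (IH (fun vs => T (a :: vs))) => //; first by case: T_mlin => _; apply.
    exact: mulr_ge0.
  move=> vs sz; apply: le_trans (T_bd (a :: vs) _) _; first by rewrite /= sz.
  by rewrite big_cons mulrA ler_wpM2r ?ler_wpM2l // prodr_ge0 // => v _; exact: norm2_ge0.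
apply: le_trans (lerD head_le tail_le) _; rewrite -natr1 /=.
have -> : k%:R * (C * rho) * norm2 (b - a) * rho ^+ k.-1
    = C * norm2 (b - a) * (k%:R * (rho * rho ^+ k.-1)) by ring.
by rewrite natrM_expr_pred le_eqVlt; apply/orP; left; apply/eqP; ring.
Qed.

End DiagonalDifference.

Section TaylorError.
Variables (R : realType) (d : nat).
Local Notation V := 'rV[R]_d.
Variables (phi : V -> R) (p : nat).

Local Notation L := (LipD p phi).

Lemma LipD_ge0 : 0 <= L.
Proof.
rewrite /LipD; set S := [set r | _].
have [hs|hs] := pselect (has_sup S); last by rewrite sup_out.
have [r Sr] := hs.1; apply: le_trans (sup_upper_bound hs Sr).
case: Sr => x [y [_ ->]]; apply: divr_ge0; [exact: opnorm_ge0 | exact: norm2_ge0].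
Qed.

Hypothesis phi_diff : forall k, (k < p)%N -> forall vs x,
  differentiable (fun y => Dk k phi y vs) x.
Hypothesis phi_lip : exists L0 : R, forall x y : V,
  opnorm p (fun vs => Dk p phi x vs - Dk p phi y vs) <= L0 * norm2 (x - y).

Lemma multilinear_Dk_top y : multilinear p (Dk p phi y).
Proof. exact: (multilinear_Dk phi_diff (leqnn p) y). Qed.

Lemma Dk_lipschitz x y vs : size vs = p ->
  `|Dk p phi x vs - Dk p phi y vs| <= L * norm2 (x - y) * \prod_(v <- vs) norm2 v.
Proof.
move=> sz; have prod_ge0 : 0 <= \prod_(v <- vs) norm2 v.
  by apply: prodr_ge0 => v _; exact: norm2_ge0.
have [->|xy] := eqVneq x y.
  by rewrite subrr normr0 !mulr_ge0 ?LipD_ge0 ?norm2_ge0.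
have D_mlin := multilinearB (multilinear_Dk_top x) (multilinear_Dk_top y).
apply: le_trans (ler_opnorm D_mlin sz) _; rewrite ler_wpM2r //.
have nxy_gt0 : 0 < norm2 (x - y) by apply: norm2_gt0; rewrite subr_eq0.
rewrite -ler_pdivrMr //; apply: sup_upper_bound; last by exists x, y.
split; first by eexists; exists x, y.
(* phi_lip is only needed here: it makes the supremum defining LipD finite *)
have [L0 hL0] := phi_lip.
exists L0 => _ [x' [y' [xy' ->]]].
by rewrite ler_pdivrMr ?norm2_gt0 ?subr_eq0.
Qed.

Lemma Dk_segment_bound (w a b : V) (rho s : R) :
  norm2 a <= rho -> norm2 b <= rho -> 0 <= s ->
  `|(Dk p phi (w + s *: b) (nseq p b) - Dk p phi (w + s *: a) (nseq p a))
     - (Dk p phi w (nseq p b) - Dk p phi w (nseq p a))|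
   <= L * norm2 (b - a) * p.+1%:R * rho ^+ p * s.
Proof.
move=> a_le b_le s0; set D := Dk p phi.
have rho0 : 0 <= rho := le_trans (norm2_ge0 a) a_le.
have Ls_ge0 : 0 <= L * s by rewrite mulr_ge0 ?LipD_ge0.
(* first move the base point from w + s a to w + s b, then the arguments from a to b *)
have -> : D (w + s *: b) (nseq p b) - D (w + s *: a) (nseq p a) - (D w (nseq p b) - D w (nseq p a))
   = (D (w + s *: b) (nseq p b) - D (w + s *: a) (nseq p b)) +
     ((D (w + s *: a) (nseq p b) - D w (nseq p b)) - (D (w + s *: a) (nseq p a) - D w (nseq p a))).
  by ring.
apply: le_trans (ler_normD _ _) _.
have move_le : `|D (w + s *: b) (nseq p b) - D (w + s *: a) (nseq p b)|
    <= L * s * norm2 (b - a) * rho ^+ p.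
  apply: le_trans (Dk_lipschitz _ _ _) _; first by rewrite size_nseq.
  rewrite prod_norm2_nseq opprD addrACA subrr add0r -scalerBr norm2Z ger0_norm //.
  by rewrite mulrA ler_wpM2l ?mulr_ge0 ?norm2_ge0 ?LipD_ge0 // lerXn2r ?nnegrE ?norm2_ge0.
have args_le : `|(D (w + s *: a) (nseq p b) - D w (nseq p b))
                  - (D (w + s *: a) (nseq p a) - D w (nseq p a))|
    <= p%:R * (L * s * rho) * norm2 (b - a) * rho ^+ p.-1.
  apply: (@multilinear_diag_lipschitz _ _ p (fun vs => D (w + s *: a) vs - D w vs)) => //.
  - exact: multilinearB (multilinear_Dk_top _) (multilinear_Dk_top _).
  - exact: mulr_ge0.
  move=> vs sz; apply: le_trans (Dk_lipschitz _ _ sz) _.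
  rewrite addrC addKr norm2Z ger0_norm // mulrA ler_wpM2r ?ler_wpM2l //.
  by apply: prodr_ge0 => v _; exact: norm2_ge0.
apply: le_trans (lerD move_le args_le) _.
have -> : p%:R * (L * s * rho) * norm2 (b - a) * rho ^+ p.-1
    = L * s * norm2 (b - a) * (p%:R * (rho * rho ^+ p.-1)) by ring.
by rewrite natrM_expr_pred -natr1 le_eqVlt; apply/orP; left; apply/eqP; ring.
Qed.

Lemma taylor_error_lipschitz (w x y : V) (rho : R) :
  norm2 (x - w) <= rho -> norm2 (y - w) <= rho ->
  `|(phi y - taylor p phi w y) - (phi x - taylor p phi w x)|
    <= L * norm2 (y - x) * rho ^+ p / p`!%:R.
Proof.
move=> xw_le yw_le; set a := x - w; set b := y - w.
pose G k (s : R) := Dk k phi (w + s *: b) (nseq k b) - Dk k phi (w + s *: a) (nseq k a).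
have G_der k (s : R) : (k < p)%N -> is_derive s (1 : R) (G k) (G k.+1 s).
  move=> kp; have Dk_der z : derivable (fun y => Dk k phi y (nseq k z)) (w + s *: z) z.
    exact/diff_derivable/phi_diff.
  have -> : G k = (fun s => Dk k phi (w + s *: b) (nseq k b))
                  - (fun s => Dk k phi (w + s *: a) (nseq k a)).
    by apply: funext => s'; rewrite /G !fctE.
  exact: is_deriveB (is_derive_line (Dk_der b)) (is_derive_line (Dk_der a)).
pose M := L * norm2 (b - a) * p.+1%:R * rho ^+ p.
have Gp_lip s : 0 <= s <= 1 -> `|G p s - G p 0| <= M * s.
  by case/andP=> s0 _; rewrite /G !scale0r !addr0; exact: Dk_segment_bound.
have unit01 : 0 <= (1 : R) <= 1 by rewrite ler01 lexx.
have := taylor_remainder_bound G_der Gp_lip unit01.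
have -> : G 0 1 - \sum_(k < p.+1) G k 0 / k`!%:R * 1 ^+ k
    = (phi y - taylor p phi w y) - (phi x - taylor p phi w x).
  rewrite /G /taylor /a /b /= !scale1r !scale0r !addr0 !subrKC.
  rewrite (_ : \sum_(k < p.+1) _ = \sum_(i < p.+1) i`!%:R^-1 * Dk i phi w (nseq i (y - w))
                                 - \sum_(i < p.+1) i`!%:R^-1 * Dk i phi w (nseq i (x - w))).
    by ring.
  by rewrite -sumrB; apply: eq_bigr => k _; rewrite expr1n mulr1 mulrC mulrBr.
rewrite expr1n mulr1 => /le_trans; apply; rewrite /M /a /b opprB addrA subrK.
rewrite factS natrM -mulr_natr le_eqVlt; apply/orP; left; apply/eqP.
by field; rewrite natr_fact_neq0 addrC natr1 pnatr_eq0.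
Qed.

End TaylorError.

Section RealInequalities.
Variable R : realType.

Lemma ler_subrXX n (x y : R) : 0 <= y -> y <= x ->
  x ^+ n - y ^+ n <= n%:R * (x - y) * x ^+ n.-1.
Proof.
move=> y0 yx; have x0 := le_trans y0 yx.
rewrite subrXX [_ * (x - y)]mulrC -mulrA ler_wpM2l ?subr_ge0 //.
have -> : n%:R * x ^+ n.-1 = \sum_(i < n) x ^+ n.-1.
  by rewrite sumr_const card_ord mulr_natl.
apply: ler_sum => i _.
have ni : (n.-1 - i + i = n.-1)%N.
  by rewrite subnK // -ltnS prednK // (leq_ltn_trans _ (ltn_ord i)).
by rewrite -[X in _ <= x ^+ X]ni exprD ler_wpM2l ?exprn_ge0 // lerXn2r ?nnegrE.
Qed.

Lemma ler_subrXX_shift n (r s y : R) : 0 <= r -> 0 <= s -> 0 <= y -> r <= y + s ->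
  r ^+ n - y ^+ n <= n%:R * s * (r + s) ^+ n.-1.
Proof.
move=> r0 s0 y0 r_le; have RHS_ge0 : 0 <= n%:R * s * (r + s) ^+ n.-1.
  by rewrite !mulr_ge0 ?exprn_ge0 ?addr_ge0.
have [ry|yr] := lerP r y; first by rewrite (le_trans _ RHS_ge0) // subr_le0 lerXn2r.
apply: le_trans (ler_subrXX n y0 (ltW yr)) _.
apply: ler_pM; rewrite ?exprn_ge0 //.
- by rewrite mulr_ge0 // subr_ge0 ltW.
- by rewrite ler_wpM2l // lerBlDl.
- by rewrite lerXn2r ?nnegrE ?addr_ge0 ?lerDl.
Qed.

Lemma ler_of_forall_addrM (X A B : R) : 0 <= B ->
  (forall t, 0 < t < 1 -> X <= A + t * B) -> X <= A.
Proof.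
move=> B0 XAB; apply/ler_addgt0Pr => e e_gt0.
have B1_gt0 : 0 < B + 1 by rewrite ltr_wpDl.
pose t := Num.min 2^-1 (e / (B + 1)).
have t01 : 0 < t < 1.
  by rewrite lt_min invr_gt0 ltr0n divr_gt0 // gt_min invf_lt1 ?ltr1n.
apply: le_trans (XAB t t01) _; rewrite lerD2l.
apply: le_trans (_ : e / (B + 1) * B <= e); first by rewrite ler_wpM2r // ge_min lexx orbT.
by rewrite mulrAC ler_pdivrMr // ler_wpM2l ?lerDl // ltW.
Qed.

Lemma powR1B_ge_affine (q : R) : exists k : nat, forall t, 0 < t < 1 ->
  1 - k%:R * t <= (1 - t) `^ (q - 1).
Proof.
exists (Num.bound `|q - 1|) => t /andP[t0 t1]; set k := Num.bound _.
have s01 : 0 < 1 - t <= 1 by rewrite subr_gt0 t1 lerBlDr lerDl ltW.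
have [q1|q1] := lerP (q - 1) 0.
  apply: le_trans (_ : 1 <= _); first by rewrite lerBlDr lerDl mulr_ge0 ?ltW.
  by have := ger_powR s01 q1; rewrite powRr0.
have kq : q - 1 <= k%:R := le_trans (ler_norm _) (ltW (archi_boundP (normr_ge0 _))).
apply: le_trans (ger_powR s01 kq); have /andP[s0 s1] := s01.
rewrite powR_mulrn; last exact: ltW.
by have := ler_subrXX k (ltW s0) s1; rewrite !expr1n mulr1 subKr; lra.
Qed.

Lemma ler_of_forall_segment (A B r s q : R) (p : nat) :
  0 <= A -> 0 <= B -> 0 <= r -> 0 <= s ->
  (forall t, 0 < t < 1 -> A * (1 - t) `^ (q - 1) <= B * (r + t * s) ^+ p) ->
  A <= B * r ^+ p.
Proof.
move=> A0 B0 r0 s0 AB; have [k hk] := powR1B_ge_affine q.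
pose Q := p%:R * s * (r + s) ^+ p.-1.
have Q0 : 0 <= Q by rewrite !mulr_ge0 ?exprn_ge0 ?addr_ge0.
have k0 : 0 <= k%:R :> R := ler0n _ k.
apply: (@ler_of_forall_addrM _ _ (A * k%:R + B * Q)).
  exact: addr_ge0 (mulr_ge0 A0 k0) (mulr_ge0 B0 Q0).
move=> t t01; have /andP[t0 t1] := t01.
have pow_le : (r + t * s) ^+ p <= r ^+ p + t * Q.
  have ts0 : 0 <= t * s by rewrite mulr_ge0 // ltW.
  have r_le : r <= r + t * s by rewrite lerDl.
  have := ler_subrXX p r0 r_le; rewrite [r + _ - r]addrAC subrr add0r.
  have : (r + t * s) ^+ p.-1 <= (r + s) ^+ p.-1.
    by rewrite lerXn2r ?nnegrE ?addr_ge0 // lerD2l ler_piMl // ltW.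
  move=> /(ler_wpM2l (mulr_ge0 (ler0n _ p) ts0)); rewrite /Q; lra.
have := AB t t01; have := ler_wpM2l A0 (hk t t01); have := ler_wpM2l B0 pow_le.
lra.
Qed.

Lemma ler_powRB1 (mu q n C : R) : 0 < mu -> 0 < q -> 0 <= n -> (n = 0 -> q != 1) ->
  0 <= C -> mu * n `^ q <= C * n -> n `^ (q - 1) <= C / mu.
Proof.
move=> mu_gt0 q_gt0 n0 q_neq1 C0 le_nq.
have [n_eq0|n_neq0] := eqVneq n 0.
  by rewrite n_eq0 powR0 ?divr_ge0 ?(ltW mu_gt0) // subr_eq0; exact: q_neq1.
have n_gt0 : 0 < n by rewrite lt_neqAle eq_sym n_neq0.
rewrite ler_pdivlMr // -(ler_pM2l n_gt0) mulrA (mulr_powRB1 n0 q_gt0) mulrC [n * C]mulrC.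
exact: le_nq.
Qed.

End RealInequalities.

Section GradientGrowth.
Variables (R : realType) (d : nat).
Local Notation V := 'rV[R]_d.

(* Along a unit vector e, t |-> <e, g(t e)> would have to increase by at least mu
   between any two parameters, hence by n mu between 0 and 1 for every n. *)
Lemma no_linear_gradient_growth (psi : V -> R) (mu : R) : (0 < d)%N -> 0 < mu ->
  ~ gradient_growth (fun r => mu * r `^ 1) psi.
Proof.
move=> d_gt0 mu_gt0 [/choice[g g_sub] growth].
have [e e1] : exists e : V, norm2 e = 1.
  pose v : V := const_mx 1.
  have v0 : v != 0.
    by apply/negP => /eqP/rowP/(_ (Ordinal d_gt0)); rewrite !mxE; apply/eqP; exact: oner_neq0.
  exists ((norm2 v)^-1 *: v).
  by rewrite norm2Z ger0_norm ?invr_ge0 ?norm2_ge0 // mulVf ?gt_eqF ?norm2_gt0.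
pose f t := dot e (g (t *: e)).
have jump s t : s < t -> mu <= f t - f s.
  move=> st; have := growth (s *: e) (t *: e) _ _ (g_sub _) (g_sub _).
  rewrite -!scalerBl norm2Z e1 mulr1 powRr1 // ltr0_norm ?subr_lt0 // opprB.
  by rewrite dotZl dotBr mulrC ler_pM2l ?subr_gt0.
have telescope n k : (0 < n)%N -> k%:R * mu <= f (k%:R / n%:R) - f 0.
  move=> n_gt0; elim: k => [|k IH]; first by rewrite !mul0r subrr.
  have := jump (k%:R / n%:R) (k.+1%:R / n%:R).
  by rewrite ltr_pM2r ?invr_gt0 ?ltr0n ?ltr_nat // -natr1 => /(_ (ltnSn k)); lra.
pose m := Num.bound `|(f 1 - f 0) / mu|.
have m_gt : (f 1 - f 0) / mu < m%:R := le_lt_trans (ler_norm _) (archi_boundP (normr_ge0 _)).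
have := telescope m.+1 m.+1 isT.
by rewrite divff ?pnatr_eq0 // -ler_pdivlMr // -natr1; lra.
Qed.

Lemma gradient_growth_segment (psi : V -> R) (mu q t : R) (xhat x u : V) :
  gradient_growth (fun r => mu * r `^ q) psi -> 0 < q -> subdiff psi xhat 0 -> 0 < t < 1 ->
  subdiff psi (x - t *: (x - xhat)) u ->
  t * (mu * norm2 (x - xhat) `^ q * (1 - t) `^ (q - 1))
    <= psi x - psi (x - t *: (x - xhat)).
Proof.
move=> [_ growth] q_gt0 xhat_min /andP[t0 t1] u_sub.
set e := x - xhat; set xt := x - t *: e.
have s0 : 0 < 1 - t by rewrite subr_gt0.
have xtE : xt - xhat = (1 - t) *: e by rewrite /xt /e scalerBl scale1r addrAC.
have := growth xhat xt u 0 u_sub xhat_min.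
have nE : norm2 (xhat - xt) = (1 - t) * norm2 e.
  by rewrite -norm2N opprB xtE norm2Z ger0_norm // ltW.
rewrite subr0 nE xtE dotZl.
rewrite powRM ?norm2_ge0 //; last exact: ltW.
rewrite -(mulr_powRB1 (ltW s0) q_gt0) => grow.
have grow_e : mu * norm2 e `^ q * (1 - t) `^ (q - 1) <= dot e u.
  rewrite -(ler_pM2l s0); apply: le_trans grow; rewrite le_eqVlt; apply/orP; left.
  by apply/eqP; ring.
have := u_sub x; rewrite (_ : x - xt = t *: e); last by rewrite /xt opprB addrC subrK.
by rewrite dotZr (dotC u e); move: (ler_wpM2l (ltW t0) grow_e); lra.
Qed.

End GradientGrowth.

Section TaylorModel.
Variables (R : realType) (d : nat).
Local Notation V := 'rV[R]_d.
Variables (phi phi0 : V -> R) (p : nat) (w : V).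

Definition taylor_model (x : V) : R :=
  taylor p phi w x + LipD p phi / (p.+1)`!%:R * norm2 (x - w) ^+ p.+1 + phi0 x.

Hypothesis phi_diff : forall k, (k < p)%N -> forall vs x,
  differentiable (fun y => Dk k phi y vs) x.
Hypothesis phi_lip : exists L0 : R, forall x y : V,
  opnorm p (fun vs => Dk p phi x vs - Dk p phi y vs) <= L0 * norm2 (x - y).

Lemma taylor_model_gap (x y : V) : (forall z, phi x + phi0 x <= phi z + phi0 z) ->
  taylor_model x - taylor_model y
    <= 2 * LipD p phi * norm2 (y - x) * (norm2 (x - w) + norm2 (y - x)) ^+ p / p`!%:R.
Proof.
move=> x_min; set L := LipD p phi; set rho := norm2 (x - w) + norm2 (y - x).
have xw_le : norm2 (x - w) <= rho by rewrite lerDl norm2_ge0.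
have yw_le : norm2 (y - w) <= rho.
  by rewrite -[y in y - w](subrK x) -addrA addrC ler_norm2D.
have xw_pow : norm2 (x - w) ^+ p.+1 - norm2 (y - w) ^+ p.+1 <= p.+1%:R * norm2 (y - x) * rho ^+ p.
  apply: ler_subrXX_shift; rewrite ?norm2_ge0 //.
  rewrite -[norm2 (y - x)]norm2N opprB -[x in x - w](subrK y) -addrA addrC.
  exact: ler_norm2D.
have model_pow : L / (p.+1)`!%:R * (norm2 (x - w) ^+ p.+1 - norm2 (y - w) ^+ p.+1)
    <= L * norm2 (y - x) * rho ^+ p / p`!%:R.
  apply: le_trans (ler_wpM2l _ xw_pow) _; first by rewrite divr_ge0 ?LipD_ge0.
  rewrite factS natrM le_eqVlt; apply/orP; left; apply/eqP.
  by field; rewrite natr_fact_neq0 addrC natr1 pnatr_eq0.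
have := taylor_error_lipschitz phi_diff phi_lip xw_le yw_le.
rewrite ler_norml /taylor_model => /andP[_ err].
by have := x_min y; move: model_pow err; rewrite -/L; lra.
Qed.

Lemma taylor_model_growth_bound (mu q : R) (xphi xhat : V) : 0 < q ->
  gradient_growth (fun r => mu * r `^ q) taylor_model -> subdiff taylor_model xhat 0 ->
  (forall z, phi xphi + phi0 xphi <= phi z + phi0 z) ->
  forall t, 0 < t < 1 ->
  mu * norm2 (xphi - xhat) `^ q * (1 - t) `^ (q - 1)
    <= 2 * LipD p phi * norm2 (xphi - xhat) / p`!%:R
       * (norm2 (xphi - w) + t * norm2 (xphi - xhat)) ^+ p.
Proof.
move=> q_gt0 growth xhat_crit xphi_min t t01; have /andP[t0 _] := t01.
set e := xphi - xhat; have [u u_sub] := growth.1 (xphi - t *: e).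
have := gradient_growth_segment growth q_gt0 xhat_crit t01 u_sub.
have := taylor_model_gap (xphi - t *: e) xphi_min.
have -> : norm2 (xphi - t *: e - xphi) = t * norm2 e.
  by rewrite addrAC subrr add0r norm2N norm2Z ger0_norm // ltW.
move=> gap grow; rewrite -(ler_pM2l t0); apply: le_trans grow (le_trans gap _).
by rewrite le_eqVlt; apply/orP; left; apply/eqP; ring.
Qed.

End TaylorModel.

Unset Implicit Arguments.

Theorem lemma5 (R : realType) (d : nat) (hd : (0 < d)%N)
  (phi phi0 : 'rV[R]_d -> R) (p : nat) (hp : (0 < p)%N) (w : 'rV[R]_d)
  (* phi is p times differentiable: nabla^p phi exists *)
  (hdiff : forall k : nat, (k < p)%N -> forall (vs : seq 'rV[R]_d) (x : 'rV[R]_d),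
      differentiable (fun y => Dk k phi y vs) x)
  (* nabla^p phi is Lipschitz *)
  (hlip : exists L : R, forall x y : 'rV[R]_d,
      opnorm p (fun vs => Dk p phi x vs - Dk p phi y vs) <= L * norm2 (x - y))
  (xphi xhat : 'rV[R]_d)
  (hxphi : forall x, phi xphi + phi0 xphi <= phi x + phi0 x)
  (hxhat : forall x,
      taylor p phi w xhat + LipD p phi / (p.+1)`!%:R * norm2 (xhat - w) ^+ p.+1
        + phi0 xhat
      <= taylor p phi w x + LipD p phi / (p.+1)`!%:R * norm2 (x - w) ^+ p.+1
        + phi0 x)
  (mu q : R) (hmu : 0 < mu) (hq : 0 < q)
  (hgrowth : gradient_growth (fun r => mu * r `^ q)
      (fun x => taylor p phi w x + LipD p phi / (p.+1)`!%:R * norm2 (x - w) ^+ p.+1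
                + phi0 x)) :
  norm2 (xphi - xhat) `^ (q - 1)
    <= 2 * LipD p phi / mu * (p`!%:R)^-1 * norm2 (xphi - w) ^+ p.
Proof.
set e := xphi - xhat; set r := norm2 (xphi - w).
have xhat_crit : subdiff (taylor_model phi phi0 p w) xhat 0.
  by move=> y; rewrite dot0l addr0; exact: hxhat.
have key := taylor_model_growth_bound hdiff hlip hq hgrowth xhat_crit hxphi.
have A0 : 0 <= mu * norm2 e `^ q by rewrite mulr_ge0 ?powR_ge0 // ltW.
have B0 : 0 <= 2 * LipD p phi * norm2 e / p`!%:R.
  by rewrite !mulr_ge0 ?invr_ge0 ?ler0n ?norm2_ge0 ?LipD_ge0.
have bound := ler_of_forall_segment A0 B0 (norm2_ge0 _) (norm2_ge0 _) key.
rewrite [X in _ <= X](_ : _ = 2 * LipD p phi / p`!%:R * r ^+ p / mu); last by ring.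
apply: (ler_powRB1 hmu hq (norm2_ge0 e)).
- move=> _; apply/eqP => q1; move: hgrowth; rewrite q1.
  exact: no_linear_gradient_growth hd hmu.
- by rewrite !mulr_ge0 ?invr_ge0 ?ler0n ?exprn_ge0 ?norm2_ge0 ?LipD_ge0.
- by apply: le_trans bound _; rewrite le_eqVlt; apply/orP; left; apply/eqP; ring.
Qed.
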